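(* Let $k$ be a field and $\mathcal{T}$ a Krull–Schmidt, Hom-finite, $k$-linear triangulated category with Serre functor $\mathbb{S}$. Let $\mathcal{A}$ be a $k$-linear abelian (full) subcategory of $\mathcal{T}$. Let $X,P\in\mathcal{A}$ with $P$ projective in $\mathcal{A}$. Then there is a strong $\mathcal{A}$-cover in $\mathcal{T}$ of the form $X\to\mathbb{S}P$ if and only if there is a natural isomorphism $D\mathcal{A}(P,-)\cong\mathcal{A}(-,X)$ of functors $\mathcal{A}^{\mathrm{op}}\to\operatorname{mod}_k$. Dually, let $Y,I\in\mathcal{A}$ with $I$ injective in $\mathcal{A}$; then there is a strong $\mathcal{A}$-envelope in $\mathcal{T}$ of the form $\mathbb{S}^{-1}I\to Y$ if and only if there is a natural isomorphism $D\mathcal{A}(-,I)\cong\mathcal{A}(Y,-)$ of functors $\mathcal{A}\to\operatorname{mod}_k$.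
   Context: $D=\operatorname{Hom}_k(-,k)$; $\operatorname{mod}_k$ is the category of finite dimensional $k$-vector spaces. A Serre functor is a $k$-linear autoequivalence $\mathbb{S}$ with isomorphisms $\mathcal{T}(X,Y)\cong D\mathcal{T}(Y,\mathbb{S}X)$ natural in $X,Y$. Subcategories are full and closed under isomorphisms. For $T\in\mathcal{T}$, a morphism $y\colon Y\to T$ with $Y\in\mathcal{A}$ is a strong $\mathcal{A}$-cover if $\mathcal{T}(Y',y)\colon\mathcal{T}(Y',Y)\to\mathcal{T}(Y',T)$ is bijective for all $Y'\in\mathcal{A}$; a morphism $y\colon T\to Y$ with $Y\in\mathcal{A}$ is a strong $\mathcal{A}$-envelope if $\mathcal{T}(y,Y')$ is bijective for all $Y'\in\mathcal{A}$. *)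

(* mor-spaces of a Hom-finite k-linear category are
   finite-dimensional k-vector spaces (vectType k); D = 'Hom(-, k^o). *)
From HB Require Import structures.
From mathcomp Require Import all_boot all_order all_algebra.
Set Implicit Arguments. Unset Strict Implicit. Unset Printing Implicit Defensive.
Import GRing.Theory.
Local Open Scope ring_scope.

Record kcat (k : fieldType) := KCat {
  ob :> Type;
  mor : ob -> ob -> vectType k;
  idm : forall X, mor X X;
  comp : forall X Y Z, mor Y Z -> mor X Y -> mor X Z;
  compA : forall X Y Z W (h : mor Z W) (g : mor Y Z) (f : mor X Y),
      comp h (comp g f) = comp (comp h g) f;
  comp1m : forall X Y (f : mor X Y), comp (idm Y) f = f;
  compm1 : forall X Y (f : mor X Y), comp f (idm X) = f;
  comp_linl : forall X Y Z (a : k) (g g' : mor Y Z) (f : mor X Y),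
      comp (a *: g + g') f = a *: comp g f + comp g' f;
  comp_linr : forall X Y Z (a : k) (g : mor Y Z) (f f' : mor X Y),
      comp g (a *: f + f') = a *: comp g f + comp g f'
}.
Arguments mor {k} _ _ _.
Arguments idm {k _} _.
Arguments comp {k _ _ _ _}.

Section Cat.
Variables (k : fieldType) (C : kcat k).

Definition is_iso (X Y : C) (f : mor C X Y) : Prop :=
  exists g : mor C Y X, comp g f = idm X /\ comp f g = idm Y.

Definition isomorphic (X Y : C) : Prop := exists f : mor C X Y, is_iso f.

Definition zero_obj (Z : C) : Prop :=
  (forall X (f g : mor C Z X), f = g) /\ (forall X (f g : mor C X Z), f = g).

Definition biproduct (X1 X2 B : C) (i1 : mor C X1 B) (i2 : mor C X2 B)
  (p1 : mor C B X1) (p2 : mor C B X2) : Prop :=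
  [/\ comp p1 i1 = idm X1, comp p2 i2 = idm X2, comp p1 i2 = 0,
      comp p2 i1 = 0 & comp i1 p1 + comp i2 p2 = idm B].

Definition fin_biproduct (n : nat) (Xs : 'I_n -> C) (X : C)
  (iota : forall i, mor C (Xs i) X) (pi : forall i, mor C X (Xs i)) : Prop :=
  [/\ forall i, comp (pi i) (iota i) = idm (Xs i),
      forall i j, i != j -> comp (pi i) (iota j) = 0
    & \sum_(i < n) comp (iota i) (pi i) = idm X].

Definition additive : Prop :=
  (exists Z, zero_obj Z) /\
  (forall X1 X2 : C, exists B i1 i2 p1 p2, @biproduct X1 X2 B i1 i2 p1 p2).

Definition local_end (Y : C) : Prop :=
  idm Y <> 0 /\ forall f : mor C Y Y, is_iso f \/ is_iso (idm Y - f).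

Definition krull_schmidt : Prop :=
  additive /\
  forall X : C, exists n (Xs : 'I_n -> C) iota pi,
    @fin_biproduct n Xs X iota pi /\ forall i, local_end (Xs i).

Record endofunctor := EndoF {
  fobj :> C -> C;
  fmap : forall X Y, mor C X Y -> mor C (fobj X) (fobj Y)
}.

Definition k_autoequiv (F : endofunctor) : Prop :=
  [/\ forall X, fmap F (idm X) = idm (F X),
      forall X Y Z (g : mor C Y Z) (f : mor C X Y),
        fmap F (comp g f) = comp (fmap F g) (fmap F f),
      forall X Y (a : k) (f f' : mor C X Y),
        fmap F (a *: f + f') = a *: fmap F f + fmap F f',
      forall X Y, bijective (@fmap F X Y)
    & forall Y, exists X, isomorphic (F X) Y].

Definition triangle_pred (Sh : endofunctor) :=
  forall X Y Z : C, mor C X Y -> mor C Y Z -> mor C Z (Sh X) -> Prop.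

Definition triangulated (Sh : endofunctor) (Dt : triangle_pred Sh) : Prop :=
  [/\ additive /\ k_autoequiv Sh,
   (forall X Y Z f g h X' Y' Z' f' g' h' (u : mor C X X') (v : mor C Y Y')
        (w : mor C Z Z'),
      @Dt X Y Z f g h -> is_iso u -> is_iso v -> is_iso w ->
      comp v f = comp f' u -> comp w g = comp g' v ->
      comp (fmap Sh u) h = comp h' w -> @Dt X' Y' Z' f' g' h') /\
   (forall X Z, zero_obj Z -> forall (g : mor C X Z) (h : mor C Z (Sh X)),
      @Dt X X Z (idm X) g h) /\
   (forall X Y (f : mor C X Y), exists Z g h, @Dt X Y Z f g h),
   (forall X Y Z f g h, @Dt X Y Z f g h <-> @Dt Y Z (Sh X) g h (- fmap Sh f)),
   (forall X Y Z f g h X' Y' Z' f' g' h' (u : mor C X X') (v : mor C Y Y'),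
      @Dt X Y Z f g h -> @Dt X' Y' Z' f' g' h' -> comp v f = comp f' u ->
      exists w : mor C Z Z', comp w g = comp g' v /\
                             comp (fmap Sh u) h = comp h' w)
 &
   (forall X Y Z (f : mor C X Y) (g : mor C Y Z)
      Q1 (p1 : mor C Y Q1) (d1 : mor C Q1 (Sh X))
      Q2 (p2 : mor C Z Q2) (d2 : mor C Q2 (Sh X))
      Q3 (p3 : mor C Z Q3) (d3 : mor C Q3 (Sh Y)),
      @Dt X Y Q1 f p1 d1 -> @Dt X Z Q2 (comp g f) p2 d2 -> @Dt Y Z Q3 g p3 d3 ->
      exists (a : mor C Q1 Q2) (b : mor C Q2 Q3),
        [/\ @Dt Q1 Q2 Q3 a b (comp (fmap Sh p1) d3), comp a p1 = comp p2 g,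
            comp d2 a = d1, comp b p2 = p3 & comp d3 b = comp (fmap Sh f) d2])].

Definition serre_functor (S : endofunctor)
  (sigma : forall X Y : C, mor C X Y -> 'Hom(mor C Y (S X), k^o)) : Prop :=
  [/\ k_autoequiv S,
      forall X Y (a : k) (f f' : mor C X Y),
        sigma X Y (a *: f + f') = a *: sigma X Y f + sigma X Y f',
      forall X Y, bijective (sigma X Y),
      forall X X' Y (a : mor C X' X) (f : mor C X Y) (u : mor C Y (S X')),
        sigma X' Y (comp f a) u = sigma X Y f (comp (fmap S a) u)
    & forall X Y Y' (b : mor C Y Y') (f : mor C X Y) (u : mor C Y' (S X)),
        sigma X Y' (comp b f) u = sigma X Y f (comp u b)].

Definition subcat (A : C -> Prop) : Prop :=
  forall X Y, isomorphic X Y -> A X -> A Y.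

Definition mono_in (A : C -> Prop) X Y (f : mor C X Y) : Prop :=
  forall W, A W -> forall g h : mor C W X, comp f g = comp f h -> g = h.
Definition epi_in (A : C -> Prop) X Y (f : mor C X Y) : Prop :=
  forall W, A W -> forall g h : mor C Y W, comp g f = comp h f -> g = h.

Definition kernel_in (A : C -> Prop) X Y (f : mor C X Y) K (kap : mor C K X)
  : Prop :=
  A K /\ comp f kap = 0 /\
  forall W, A W -> forall w : mor C W X, comp f w = 0 ->
    exists! t : mor C W K, comp kap t = w.
Definition cokernel_in (A : C -> Prop) X Y (f : mor C X Y) Q (c : mor C Y Q)
  : Prop :=
  A Q /\ comp c f = 0 /\
  forall W, A W -> forall w : mor C Y W, comp w f = 0 ->
    exists! t : mor C Q W, comp t c = w.

Definition abelian_subcat (A : C -> Prop) : Prop :=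
  [/\ subcat A,
      exists Z, A Z /\ zero_obj Z,
      forall X1 X2, A X1 -> A X2 ->
        exists B i1 i2 p1 p2, A B /\ @biproduct X1 X2 B i1 i2 p1 p2,
      forall X Y (f : mor C X Y), A X -> A Y ->
        (exists K kap, @kernel_in A X Y f K kap) /\
        (exists Q c, @cokernel_in A X Y f Q c)
    & forall X Y (f : mor C X Y), A X -> A Y ->
        (mono_in A f -> exists Q (g : mor C Y Q), A Q /\ kernel_in A g f) /\
        (epi_in A f -> exists K (g : mor C K X), A K /\ cokernel_in A g f)].

Definition projective_in (A : C -> Prop) (P : C) : Prop :=
  forall B D (e : mor C B D) (f : mor C P D), A B -> A D -> epi_in A e ->
    exists g : mor C P B, comp e g = f.
Definition injective_in (A : C -> Prop) (I : C) : Prop :=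
  forall B D (m : mor C B D) (f : mor C B I), A B -> A D -> mono_in A m ->
    exists g : mor C D I, comp g m = f.

Definition strong_cover (A : C -> Prop) (Y T : C) (y : mor C Y T) : Prop :=
  A Y /\ forall Y', A Y' -> bijective (fun u : mor C Y' Y => comp y u).
Definition strong_envelope (A : C -> Prop) (T Y : C) (y : mor C T Y) : Prop :=
  A Y /\ forall Y', A Y' -> bijective (fun u : mor C Y Y' => comp u y).

Definition nat_iso_DHomP (A : C -> Prop) (P X : C)
  (theta : forall Z : C, mor C Z X -> 'Hom(mor C P Z, k^o)) : Prop :=
  [/\ forall Z, A Z -> forall (a : k) (h h' : mor C Z X),
        theta Z (a *: h + h') = a *: theta Z h + theta Z h',
      forall Z, A Z -> bijective (theta Z)
    & forall Z Z', A Z -> A Z' -> forall (g : mor C Z Z') (h : mor C Z' X)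
        (u : mor C P Z), theta Z (comp h g) u = theta Z' h (comp g u)].

Definition nat_iso_DHomI (A : C -> Prop) (I Y : C)
  (theta : forall Z : C, mor C Y Z -> 'Hom(mor C Z I, k^o)) : Prop :=
  [/\ forall Z, A Z -> forall (a : k) (h h' : mor C Y Z),
        theta Z (a *: h + h') = a *: theta Z h + theta Z h',
      forall Z, A Z -> bijective (theta Z)
    & forall Z Z', A Z -> A Z' -> forall (g : mor C Z Z') (h : mor C Y Z)
        (v : mor C Z' I), theta Z' (comp g h) v = theta Z h (comp v g)].

End Cat.

(* Serre duality gives T(Z, S P) = D T(P, Z), naturally in Z, so a morphism
   y : X -> S P induces the natural transformation A(-, X) -> D A(P, -),
   h |-> sigma(y h); it is invertible exactly when every y o - : A(Z, X) ->
   T(Z, S P) is bijective, i.e. when y is a strong A-cover.  By Yoneda, every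
   natural transformation arises in this way from the y corresponding to the
   image of 1_X.  Envelopes are dual, using T(T, Z) = D T(Z, S T) = D T(Z, I). *)
From HB Require Import structures.
From mathcomp Require Import all_boot all_order all_algebra.
Set Implicit Arguments. Unset Strict Implicit. Unset Printing Implicit Defensive.
Import GRing.Theory.
Local Open Scope ring_scope.

Lemma bij_compr (A B C : Type) (f : B -> A) (h : C -> B) :
  bijective f -> bijective (f \o h) -> bijective h.
Proof.
move=> [f' fK f'K] fh_bij.
apply: (@eq_bij _ _ (f' \o (f \o h))) => [|x /=]; last by rewrite fK.
by apply: bij_comp fh_bij; exists f.
Qed.

Section LinearMaps.
Variables (K : fieldType) (U V : vectType K).

Definition linear_of (f : U -> V) (f_lin : linear f) : {linear U -> V} :=
  HB.pack_for {linear U -> V} f (GRing.isLinear.Build K U V *:%R f f_lin).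

Lemma linfunE_linear (f : U -> V) : linear f -> forall x, linfun f x = f x.
Proof. by move=> f_lin; apply: (lfunE (linear_of f_lin)). Qed.

End LinearMaps.

Lemma comp_linfun_bij (K : fieldType) (U V W : vectType K) (f : U -> V) :
  linear f -> bijective f ->
  bijective (fun Phi : 'Hom(V, W) => (Phi \o linfun f)%VF).
Proof.
move=> f_lin [g fK gK].
have g_lin : linear g := can2_linear (f := linear_of f_lin) fK gK.
exists (fun Psi => (Psi \o linfun g)%VF) => Phi; apply/lfunP => x;
  by rewrite !comp_lfunE linfunE_linear // linfunE_linear // ?fK ?gK.
Qed.

Section Composition.
Variables (k : fieldType) (C : kcat k).

Lemma comp_linear (X Y Z : C) (g : mor C Y Z) :
  linear (fun f : mor C X Y => comp g f).
Proof. by move=> a f f'; rewrite comp_linr. Qed.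

Lemma comp_iso_bij (X Y Z : C) (g : mor C Y Z) :
  is_iso g -> bijective (fun f : mor C X Y => comp g f).
Proof.
by case=> g' [g'g gg']; exists (comp g') => f; rewrite compA ?g'g ?gg' comp1m.
Qed.

Lemma autoequiv_fmap_linear (F : endofunctor C) :
  k_autoequiv F -> forall X Y : C, linear (@fmap _ _ F X Y).
Proof. by case=> _ _ F_lin _ _ X Y a f f'; apply: F_lin. Qed.

End Composition.

Arguments comp_linear {k C} X {Y Z}.
Arguments comp_iso_bij {k C} X {Y Z g}.
Arguments autoequiv_fmap_linear {k C F} _ X Y.

Section SerreDuality.
Variables (k : fieldType) (C : kcat k) (S : endofunctor C).
Variable sigma : forall X Y : C, mor C X Y -> 'Hom(mor C Y (S X), k^o).
Hypothesis sigma_serre : serre_functor sigma.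

Definition serre_iso_to (P Z : C) (h : mor C Z (S P)) : 'Hom(mor C P Z, k^o) :=
  (sigma h \o linfun (@fmap _ _ S P Z))%VF.
Arguments serre_iso_to {P Z}.

Lemma serre_iso_to_linear (P Z : C) (a : k) (h h' : mor C Z (S P)) :
  serre_iso_to (a *: h + h') = a *: serre_iso_to h + serre_iso_to h'.
Proof.
case: sigma_serre => _ sigma_lin _ _ _.
by rewrite /serre_iso_to sigma_lin comp_lfunDl comp_lfunZl.
Qed.

Lemma serre_iso_to_bij (P Z : C) : bijective (@serre_iso_to P Z).
Proof.
case: sigma_serre => S_equiv _ sigma_bij _ _; have [_ _ _ S_bij _] := S_equiv.
have S_lin := autoequiv_fmap_linear S_equiv P Z.
exact: bij_comp (comp_linfun_bij _ S_lin (S_bij P Z)) (sigma_bij Z (S P)).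
Qed.

Lemma serre_iso_to_comp (P Z Z' : C) (g : mor C Z Z') (h : mor C Z' (S P))
  (u : mor C P Z) : serre_iso_to (comp h g) u = serre_iso_to h (comp g u).
Proof.
case: sigma_serre => S_equiv _ _ sigma_natl _; have [_ S_comp _ _ _] := S_equiv.
by rewrite !comp_lfunE !linfunE_linear ?sigma_natl ?S_comp //;
  apply: autoequiv_fmap_linear.
Qed.

Variables (T I : C) (g : mor C I (S T)).

Definition serre_iso_from (Z : C) (h : mor C T Z) : 'Hom(mor C Z I, k^o) :=
  (sigma h \o linfun (fun v : mor C Z I => comp g v))%VF.
Arguments serre_iso_from {Z}.

Lemma serre_iso_from_linear (Z : C) (a : k) (h h' : mor C T Z) :
  serre_iso_from (a *: h + h') = a *: serre_iso_from h + serre_iso_from h'.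
Proof.
case: sigma_serre => _ sigma_lin _ _ _.
by rewrite /serre_iso_from sigma_lin comp_lfunDl comp_lfunZl.
Qed.

Lemma serre_iso_from_bij (Z : C) : is_iso g -> bijective (@serre_iso_from Z).
Proof.
case: sigma_serre => _ _ sigma_bij _ _ g_iso.
exact: bij_comp (comp_linfun_bij _ (comp_linear Z g) (comp_iso_bij Z g_iso))
  (sigma_bij T Z).
Qed.

Lemma serre_iso_from_comp (Z Z' : C) (b : mor C Z Z') (h : mor C T Z)
  (v : mor C Z' I) : serre_iso_from (comp b h) v = serre_iso_from h (comp v b).
Proof.
case: sigma_serre => _ _ _ _ sigma_natr.
by rewrite !comp_lfunE !linfunE_linear ?sigma_natr ?compA // => *;
  apply: comp_linear.
Qed.

End SerreDuality.

Section CoversAndEnvelopes.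
Variables (k : fieldType) (C : kcat k) (S : endofunctor C).
Variable sigma : forall X Y : C, mor C X Y -> 'Hom(mor C Y (S X), k^o).
Hypothesis sigma_serre : serre_functor sigma.
Variable A : C -> Prop.

Lemma strong_cover_nat_iso (P X : C) (y : mor C X (S P)) :
  strong_cover A y ->
  @nat_iso_DHomP _ _ A P X (fun Z h => serre_iso_to sigma (comp y h)).
Proof.
case=> _ y_bij; split=> [Z _ a h h' | Z AZ | Z Z' _ _ g h u].
- by rewrite comp_linr (serre_iso_to_linear sigma_serre).
- exact: bij_comp (serre_iso_to_bij sigma_serre P Z) (y_bij Z AZ).
- by rewrite compA (serre_iso_to_comp sigma_serre).
Qed.

Lemma nat_iso_strong_cover (P X : C) theta (y : mor C X (S P)) :
  A X -> @nat_iso_DHomP _ _ A P X theta ->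
  serre_iso_to sigma y = theta X (idm X) -> strong_cover A y.
Proof.
move=> AX [_ theta_bij theta_comp] y_theta; split=> // Z AZ.
have yoneda h : theta Z h = serre_iso_to sigma (comp y h).
  apply/lfunP => u.
  by rewrite (serre_iso_to_comp sigma_serre) y_theta -theta_comp ?comp1m.
apply: (bij_compr (serre_iso_to_bij sigma_serre P Z)).
exact: eq_bij (theta_bij Z AZ) _ yoneda.
Qed.

Lemma strong_envelope_nat_iso (T I Y : C) (g : mor C I (S T)) (y : mor C T Y) :
  is_iso g -> strong_envelope A y ->
  @nat_iso_DHomI _ _ A I Y (fun Z h => serre_iso_from sigma g (comp h y)).
Proof.
move=> g_iso [_ y_bij]; split=> [Z _ a h h' | Z AZ | Z Z' _ _ b h v].
- by rewrite comp_linl (serre_iso_from_linear sigma_serre).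
- exact: bij_comp (serre_iso_from_bij sigma_serre Z g_iso) (y_bij Z AZ).
- by rewrite -compA (serre_iso_from_comp sigma_serre).
Qed.

Lemma nat_iso_strong_envelope (T I Y : C) (g : mor C I (S T)) theta
    (y : mor C T Y) :
  A Y -> is_iso g -> @nat_iso_DHomI _ _ A I Y theta ->
  serre_iso_from sigma g y = theta Y (idm Y) -> strong_envelope A y.
Proof.
move=> AY g_iso [_ theta_bij theta_comp] y_theta; split=> // Z AZ.
have yoneda h : theta Z h = serre_iso_from sigma g (comp h y).
  apply/lfunP => v.
  by rewrite (serre_iso_from_comp sigma_serre) y_theta -theta_comp ?compm1.
apply: (bij_compr (serre_iso_from_bij sigma_serre Z g_iso)).
exact: eq_bij (theta_bij Z AZ) _ yoneda.
Qed.

End CoversAndEnvelopes.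

Theorem lemma2p5 (k : fieldType) (C : kcat k)
  (Sh : endofunctor C) (Dt : triangle_pred Sh) (hT : triangulated Dt)
  (hKS : krull_schmidt C)
  (S : endofunctor C)
  (sigma : forall X Y : C, mor C X Y -> 'Hom(mor C Y (S X), k^o))
  (hS : serre_functor sigma)
  (A : C -> Prop) (hA : abelian_subcat A) :
  (forall X P : C, A X -> A P -> projective_in A P ->
     ((exists y : mor C X (S P), strong_cover A y) <->
      (exists theta, @nat_iso_DHomP k C A P X theta))) /\
  (forall Y I : C, A Y -> A I -> injective_in A I ->
     ((exists (T : C) (y : mor C T Y), isomorphic (S T) I /\ strong_envelope A y) <->
      (exists theta, @nat_iso_DHomI k C A I Y theta))).
Proof.
split=> [X P AX _ _ | Y I AY _ _]; split.
- by case=> y y_cover; eexists; exact: (strong_cover_nat_iso hS y_cover).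
- case=> theta theta_iso.
  have [y_of _ y_ofK] := serre_iso_to_bij hS P X.
  exists (y_of (theta X (idm X))).
  exact: (nat_iso_strong_cover hS AX theta_iso (y_ofK _)).
- case=> T [y [[f [g [gf fg]]] y_envelope]].
  have g_iso : is_iso g by exists f.
  by eexists; exact: (strong_envelope_nat_iso hS g_iso y_envelope).
- case=> theta theta_iso.
  have [[_ _ _ _ S_dense] _ _ _ _] := hS.
  have [T [f [g [gf fg]]]] := S_dense I.
  have g_iso : is_iso g by exists f.
  have [y_of _ y_ofK] := serre_iso_from_bij hS Y g_iso.
  exists T, (y_of (theta Y (idm Y))); split; first by exists f, g.
  exact: (nat_iso_strong_envelope hS AY g_iso theta_iso (y_ofK _)).
Qed.
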